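(* Let $G=(V,E)$ be a complete bipartite graph with $V=V_1\cup V_2$, $V_1\cap V_2=\emptyset$, $V_1,V_2\neq\emptyset$, and $E=\{\{i,j\}: i\in V_1,\ j\in V_2\}$. Let $c\in\mathbb{R}^{|V|}$ have strictly positive components and $\rho>0$. Then there exist strictly positive edge weights such that the weighted adjacency matrix $A$ satisfies $Ac=\rho c$ if and only if $\sum_{j\in V_1}c_j^2=\sum_{j\in V_2}c_j^2$.
   Context: For positive edge weights $w_{ij}=w_{ji}$ ($\{i,j\}\in E$), the weighted adjacency matrix $A$ has $a_{ij}=w_{ij}$ if $\{i,j\}\in E$ and $a_{ij}=0$ otherwise. *)

From mathcomp Require Import all_boot all_order all_algebra.
Set Implicit Arguments. Unset Strict Implicit. Unset Printing Implicit Defensive.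
Import Order.TTheory GRing.Theory Num.Theory.
Local Open Scope ring_scope.

(* Complete bipartite graph on vertex set 'I_n with parts V1 and its
   complement V2 = ~: V1: {i,j} is an edge iff exactly one endpoint is in V1. *)
Definition cb_edge (n : nat) (V1 : {set 'I_n}) (i j : 'I_n) : bool :=
  ((i \in V1) && (j \notin V1)) || ((i \notin V1) && (j \in V1)).

Definition pos_sym_weights (R : numDomainType) (n : nat) (e : rel 'I_n)
  (w : 'I_n -> 'I_n -> R) : Prop :=
  (forall i j, e i j -> w i j = w j i) /\ (forall i j, e i j -> 0 < w i j).

Definition wadj (R : numDomainType) (n : nat) (e : rel 'I_n)
  (w : 'I_n -> 'I_n -> R) : 'M[R]_n :=
  \matrix_(i, j) (if e i j then w i j else 0).

From mathcomp Require Import all_boot all_order all_algebra.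
From mathcomp Require Import ring.
Import Order.TTheory GRing.Theory Num.Theory.
Local Open Scope ring_scope.

(* Necessity: for symmetric weights, the form c^T A c can be summed over the
   rows in V1 or over the rows in V2, each edge being counted once either way;
   with A c = rho c the two sums are rho |c_V1|^2 and rho |c_V2|^2.
   Sufficiency: if |c_V1|^2 = |c_V2|^2 = S, the rank-one weights
   w_ij = rho c_i c_j / S are positive and symmetric, and A c = rho c. *)

Section CompleteBipartite.

Variables (R : numFieldType) (n : nat) (V1 : {set 'I_n}) (c : 'cV[R]_n).

Lemma mulmx_wadj_cb_in (w : 'I_n -> 'I_n -> R) i : i \in V1 ->
  (wadj (cb_edge V1) w *m c) i 0 = \sum_(j in ~: V1) w i j * c j 0.
Proof.
move=> Vi; rewrite mxE [RHS]big_mkcond; apply: eq_bigr => j _.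
by rewrite mxE /cb_edge Vi in_setC; case: (j \in V1); rewrite ?mul0r.
Qed.

Lemma mulmx_wadj_cb_notin (w : 'I_n -> 'I_n -> R) i : i \in ~: V1 ->
  (wadj (cb_edge V1) w *m c) i 0 = \sum_(j in V1) w i j * c j 0.
Proof.
rewrite in_setC => Vi; rewrite mxE [RHS]big_mkcond; apply: eq_bigr => j _.
by rewrite mxE /cb_edge (negbTE Vi); case: (j \in V1); rewrite ?mul0r.
Qed.

Lemma wadj_cb_form_balance (w : 'I_n -> 'I_n -> R) :
  (forall i j, cb_edge V1 i j -> w i j = w j i) ->
  \sum_(i in V1) c i 0 * (wadj (cb_edge V1) w *m c) i 0 =
  \sum_(i in ~: V1) c i 0 * (wadj (cb_edge V1) w *m c) i 0.
Proof.
move=> w_sym.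
under eq_bigr => i Vi do rewrite mulmx_wadj_cb_in // mulr_sumr.
under [RHS]eq_bigr => i Vi do rewrite mulmx_wadj_cb_notin // mulr_sumr.
rewrite exchange_big; apply: eq_bigr => j /[!in_setC] Vj; apply: eq_bigr => i Vi.
by rewrite w_sym ?/cb_edge ?Vi ?Vj // mulrCA [RHS]mulrCA [c j 0 * _]mulrC.
Qed.

Lemma wadj_cb_eigen_sqr_balance (w : 'I_n -> 'I_n -> R) (rho : R) :
  rho != 0 -> (forall i j, cb_edge V1 i j -> w i j = w j i) ->
  wadj (cb_edge V1) w *m c = rho *: c ->
  \sum_(j in V1) c j 0 ^+ 2 = \sum_(j in ~: V1) c j 0 ^+ 2.
Proof.
move=> rho_neq0 w_sym eigen_c; apply: (mulfI rho_neq0).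
have form_sqr (P : pred 'I_n) : \sum_(i in P) c i 0 * (wadj (cb_edge V1) w *m c) i 0
    = rho * \sum_(j in P) c j 0 ^+ 2.
  by rewrite mulr_sumr; apply: eq_bigr => i _; rewrite eigen_c mxE mulrCA expr2.
by rewrite -!form_sqr wadj_cb_form_balance.
Qed.

Lemma wadj_cb_rank_one_eigen (rho S : R) : S != 0 ->
  \sum_(j in V1) c j 0 ^+ 2 = S -> \sum_(j in ~: V1) c j 0 ^+ 2 = S ->
  wadj (cb_edge V1) (fun i j => rho * c i 0 * c j 0 / S) *m c = rho *: c.
Proof.
move=> S_neq0 sumV1 sumV2; apply/matrixP => i k; rewrite (ord1 k) [RHS]mxE.
have sum_rank_one (P : pred 'I_n) :
    \sum_(j in P) rho * c i 0 * c j 0 / S * c j 0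
    = rho * c i 0 / S * \sum_(j in P) c j 0 ^+ 2.
  by rewrite mulr_sumr; apply: eq_bigr => j _; rewrite expr2; field.
have [Vi | Vi] := boolP (i \in V1).
- by rewrite mulmx_wadj_cb_in // sum_rank_one sumV2; field.
- by rewrite mulmx_wadj_cb_notin ?in_setC // sum_rank_one sumV1; field.
Qed.

End CompleteBipartite.

Theorem mainTheorem3 (R : realFieldType) (n : nat) (V1 : {set 'I_n})
  (hV1 : V1 != set0) (hV2 : ~: V1 != set0)
  (c : 'cV[R]_n) (hc : forall i, 0 < c i 0) (rho : R) (hrho : 0 < rho) :
  (exists w : 'I_n -> 'I_n -> R,
     pos_sym_weights (cb_edge V1) w /\
     wadj (cb_edge V1) w *m c = rho *: c)
  <->
  \sum_(j in V1) c j 0 ^+ 2 = \sum_(j in ~: V1) c j 0 ^+ 2.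
Proof.
split=> [[w [[w_sym _] eigen_c]] | S_balance].
  exact: wadj_cb_eigen_sqr_balance (lt0r_neq0 hrho) w_sym eigen_c.
set S := \sum_(j in V1) c j 0 ^+ 2 in S_balance *.
have S_gt0 : 0 < S.
  case/set0Pn: hV1 => k Vk; rewrite /S (bigD1 k) //= ltr_pwDl ?exprn_gt0 //.
  by apply: sumr_ge0 => i _; rewrite sqr_ge0.
exists (fun i j => rho * c i 0 * c j 0 / S); split; first split.
- by move=> i j _; rewrite -!mulrA [c i 0 * _]mulrCA.
- by move=> i j _; rewrite divr_gt0 // !mulr_gt0.
- exact: wadj_cb_rank_one_eigen (lt0r_neq0 S_gt0) erefl (esym S_balance).
Qed.
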